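(* Let $A,B\in\mathbb{R}^{n\times n}$ be symmetric, $a,b\in\mathbb{R}^n$, $c,d\in\mathbb{R}$, $\alpha\le\beta$ real, $f(x)=x^TAx+2a^Tx+c$, $h(x)=x^TBx+2b^Tx+d$. Suppose $B\neq 0$ and there exist $\widehat{x}\in\mathbb{R}^n$ and a symmetric $\widehat{X}$ with $\widehat{X}-\widehat{x}\widehat{x}^T$ positive definite and $\alpha<B\bullet\widehat{X}+2b^T\widehat{x}+d<\beta$. Then the problem $\inf\{f(x): \alpha\le h(x)\le\beta\}$ is bounded below (i.e. has optimal value $>-\infty$) if and only if there exist $\mu,s\in\mathbb{R}$ with $\begin{bmatrix}A+\mu B & a+\mu b\\ a^T+\mu b^T & s\end{bmatrix}\succeq 0$ (i.e. the Lagrangian dual problem $\sup\{c+\mu d-\mu_-\beta+\mu_+\alpha-s : \mu,s\in\mathbb{R},\ \begin{bmatrix}A+\mu B & a+\mu b\\ a^T+\mu b^T & s\end{bmatrix}\succeq 0\}$, with $\mu_+=\max\{\mu,0\}$, $\mu_-=-\min\{\mu,0\}$, is feasible).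
   Context: $M\succeq 0$ means $M$ is positive semidefinite; $M\bullet N=\sum_{i,j}m_{ij}n_{ij}$. *)

From mathcomp Require Import all_boot all_order all_algebra.
From mathcomp Require Import reals.
Set Implicit Arguments. Unset Strict Implicit. Unset Printing Implicit Defensive.
Import Order.TTheory GRing.Theory Num.Theory.
Local Open Scope ring_scope.

Definition sc (R : ringType) (M : 'M[R]_1) : R := M ord0 ord0.

Definition psd (R : realType) (n : nat) (M : 'M[R]_n) : Prop :=
  M^T = M /\ forall v : 'cV[R]_n, 0 <= sc (v^T *m M *m v).

Definition pd (R : realType) (n : nat) (M : 'M[R]_n) : Prop :=
  M^T = M /\ forall v : 'cV[R]_n, v != 0 -> 0 < sc (v^T *m M *m v).

Definition frob (R : ringType) (m n : nat) (M N : 'M[R]_(m, n)) : R :=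
  \sum_(i < m) \sum_(j < n) M i j * N i j.

Definition quadf (R : realType) (n : nat) (A : 'M[R]_n) (a : 'cV[R]_n) (c : R)
  (x : 'cV[R]_n) : R :=
  sc (x^T *m A *m x) + 2 * sc (a^T *m x) + c.

Definition dualmx (R : realType) (n : nat) (A B : 'M[R]_n) (a b : 'cV[R]_n)
  (mu s : R) : 'M[R]_(n + 1) :=
  block_mx (A + mu *: B) (a + mu *: b) (a^T + mu *: b^T) (s%:M).

(* Let L bound f from below on the feasible set and let m in [alpha, beta] be
   a level that h crosses strictly.  Homogenizing gives the quadratic forms
   P = [A a; a^T c-L] and Q = [B b; b^T d-m] on R^(n+1), and P is nonnegative
   on the null cone of Q: at points (x, t) with t <> 0 this is f >= L on the
   level set {h = m}; at points (x, 0) it says x^T A x >= 0 whenever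
   x^T B x = 0, for otherwise f goes to -oo along the points x0 + s x + r w of
   the level set, where w^T B w <> 0 and r = O(sqrt |s|).  As Q takes both
   signs, Finsler's lemma gives mu with P + mu Q psd, which is the dual matrix
   for s = c - L + mu (d - m).
   The level m exists because B <> 0 makes h nonconstant and the Slater point
   of the SDP relaxation forces h to take a value in (alpha, beta): if h were
   bounded on one side, B would be semidefinite, and B • P would have a sign
   for the positive definite P = Xh - xh xh^T.  The converse is immediate by
   evaluating the dual matrix at (x, 1). *)

From mathcomp Require Import all_boot all_order all_algebra.
From mathcomp Require Import reals classical_sets.
From mathcomp Require Import ring lra.
From Stdlib Require Import Classical.
Set Implicit Arguments. Unset Strict Implicit. Unset Printing Implicit Defensive.
Import Order.TTheory GRing.Theory Num.Theory.
Local Open Scope ring_scope.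

Section Forms.
Variable R : realType.
Implicit Types (k t : R).

Definition bform n (M : 'M[R]_n) (u v : 'cV[R]_n) : R := sc (u^T *m M *m v).
Definition vdot n (a x : 'cV[R]_n) : R := sc (a^T *m x).

Lemma sc0 : sc (0 : 'M[R]_1) = 0.
Proof. by rewrite /sc mxE. Qed.

Lemma scD (X Y : 'M[R]_1) : sc (X + Y) = sc X + sc Y.
Proof. by rewrite /sc mxE. Qed.

Lemma scN (X : 'M[R]_1) : sc (- X) = - sc X.
Proof. by rewrite /sc mxE. Qed.

Lemma scZ k (X : 'M[R]_1) : sc (k *: X) = k * sc X.
Proof. by rewrite /sc mxE. Qed.

Lemma sc_tr (X : 'M[R]_1) : sc X^T = sc X.
Proof. by rewrite /sc mxE. Qed.

Lemma sc_scalar k : sc (k%:M : 'M[R]_1) = k.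
Proof. by rewrite /sc mxE. Qed.

Lemma sc_mul (X Y : 'M[R]_1) : sc (X *m Y) = sc X * sc Y.
Proof. by rewrite /sc mxE big_ord1. Qed.

Lemma bformDl n (M : 'M[R]_n) u v w : bform M (u + v) w = bform M u w + bform M v w.
Proof. by rewrite /bform linearD /= !mulmxDl scD. Qed.

Lemma bformDr n (M : 'M[R]_n) u v w : bform M w (u + v) = bform M w u + bform M w v.
Proof. by rewrite /bform !mulmxDr scD. Qed.

Lemma bformZl n (M : 'M[R]_n) k u w : bform M (k *: u) w = k * bform M u w.
Proof. by rewrite /bform linearZ /= -!scalemxAl scZ. Qed.

Lemma bformZr n (M : 'M[R]_n) k u w : bform M w (k *: u) = k * bform M w u.
Proof. by rewrite /bform -!scalemxAr scZ. Qed.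

Lemma bformC n (M : 'M[R]_n) u v : M^T = M -> bform M u v = bform M v u.
Proof. by move=> sM; rewrite /bform -sc_tr !trmx_mul trmxK sM mulmxA. Qed.

Lemma bform_mxD n (M N : 'M[R]_n) u v : bform (M + N) u v = bform M u v + bform N u v.
Proof. by rewrite /bform mulmxDr mulmxDl scD. Qed.

Lemma bform_mxZ n (M : 'M[R]_n) k u v : bform (k *: M) u v = k * bform M u v.
Proof. by rewrite /bform -scalemxAr -scalemxAl scZ. Qed.

Lemma bform_delta n (B : 'M[R]_n) i j : bform B (delta_mx i 0) (delta_mx j 0) = B i j.
Proof. by rewrite /bform trmx_delta -rowE -colE /sc !mxE. Qed.

Lemma vdotC n (a x : 'cV[R]_n) : sc (x^T *m a) = vdot a x.
Proof. by rewrite /vdot -sc_tr trmx_mul trmxK. Qed.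

Lemma vdotDl n (a b x : 'cV[R]_n) : vdot (a + b) x = vdot a x + vdot b x.
Proof. by rewrite /vdot linearD /= mulmxDl scD. Qed.

Lemma vdotDr n (a x y : 'cV[R]_n) : vdot a (x + y) = vdot a x + vdot a y.
Proof. by rewrite /vdot mulmxDr scD. Qed.

Lemma vdotZl n (a x : 'cV[R]_n) k : vdot (k *: a) x = k * vdot a x.
Proof. by rewrite /vdot linearZ /= -scalemxAl scZ. Qed.

Lemma vdotZr n (a x : 'cV[R]_n) k : vdot a (k *: x) = k * vdot a x.
Proof. by rewrite /vdot -scalemxAr scZ. Qed.

Lemma bform_line n (M : 'M[R]_n) u w t : M^T = M ->
  bform M (u + t *: w) (u + t *: w) =
  bform M u u + 2 * t * bform M u w + t ^+ 2 * bform M w w.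
Proof.
by move=> sM; rewrite !(bformDl, bformDr, bformZl, bformZr) (bformC w u sM); ring.
Qed.

Lemma quadfE n (M : 'M[R]_n) m k x : quadf M m k x = bform M x x + 2 * vdot m x + k.
Proof. by []. Qed.

Lemma quadfN n (M : 'M[R]_n) m k x : quadf (- M) (- m) (- k) x = - quadf M m k x.
Proof.
rewrite !quadfE /bform /vdot mulmxN mulNmx scN linearN /= mulNmx scN; ring.
Qed.

Lemma quadf_shift n (M : 'M[R]_n) m k L y : quadf M m (k - L) y = quadf M m k y - L.
Proof. by rewrite !quadfE; ring. Qed.

Lemma quadf_comb n (A B : 'M[R]_n) a b c d mu k x :
  quadf (A + mu *: B) (a + mu *: b) k x =
  quadf A a c x + mu * quadf B b d x + (k - c - mu * d).
Proof. by rewrite !quadfE bform_mxD bform_mxZ vdotDl vdotZl; ring. Qed.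

Lemma quadf_line n (M : 'M[R]_n) m k x0 x t : M^T = M ->
  quadf M m k (x0 + t *: x) =
  quadf M m k x0 + 2 * t * (bform M x0 x + vdot m x) + t ^+ 2 * bform M x x.
Proof. by move=> sM; rewrite !quadfE bform_line // vdotDr vdotZr; ring. Qed.

Lemma quadf_plane n (M : 'M[R]_n) m k x0 x w s r : M^T = M ->
  quadf M m k (x0 + s *: x + r *: w) =
  quadf M m k x0 + 2 * s * (bform M x0 x + vdot m x) + 2 * r * (bform M x0 w + vdot m w)
  + s ^+ 2 * bform M x x + 2 * s * r * bform M x w + r ^+ 2 * bform M w w.
Proof.
move=> sM; rewrite !quadfE !(bformDl, bformDr, bformZl, bformZr, vdotDr, vdotZr).
rewrite (bformC _ x0 sM) (bformC _ x0 sM) (bformC _ x sM) (bformC w x sM); ring.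
Qed.

End Forms.

Section RealPolynomials.
Variable R : realType.

Lemma ler_mul_norm (x y : R) : x * y <= `|x| * `|y|.
Proof. by rewrite -normrM ler_norm. Qed.

Lemma quadratic_real_roots (a b q : R) : a != 0 -> a * q <= 0 ->
  exists r1 r2, [/\ a * r1 ^+ 2 + 2 * b * r1 + q = 0,
                    a * r2 ^+ 2 + 2 * b * r2 + q = 0 & a * (r1 * r2) = q].
Proof.
move=> a0 aq; have disc : 0 <= b ^+ 2 - a * q by have := sqr_ge0 b; lra.
pose sq := Num.sqrt (b ^+ 2 - a * q).
have sq2 : sq ^+ 2 = b ^+ 2 - a * q by rewrite sqr_sqrtr.
exists ((- b + sq) / a), ((- b - sq) / a); split.
- have -> : a * ((- b + sq) / a) ^+ 2 + 2 * b * ((- b + sq) / a) + q =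
            (sq ^+ 2 - (b ^+ 2 - a * q)) / a by field.
  by rewrite sq2 subrr mul0r.
- have -> : a * ((- b - sq) / a) ^+ 2 + 2 * b * ((- b - sq) / a) + q =
            (sq ^+ 2 - (b ^+ 2 - a * q)) / a by field.
  by rewrite sq2 subrr mul0r.
- have -> : a * ((- b + sq) / a * ((- b - sq) / a)) = (b ^+ 2 - sq ^+ 2) / a by field.
  by rewrite sq2 opprB addrC subrK mulrAC divff // mul1r.
Qed.

Lemma small_real_root (a b q : R) : a != 0 -> a * q <= 0 ->
  exists r, a * r ^+ 2 + 2 * b * r + q = 0 /\ r ^+ 2 * `|a| <= `|q|.
Proof.
move=> a0 aq; have [r1 [r2 [e1 e2 prod]]] := quadratic_real_roots b a0 aq.
have normq : `|r1| * `|r2| * `|a| = `|q| by rewrite -prod -!normrM mulrC.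
have [le12|lt21] := lerP `|r1| `|r2|.
- exists r1; split => //; rewrite -real_normK ?num_real // -normq expr2.
  by apply: ler_wpM2r => //; apply: ler_wpM2l.
- exists r2; split => //; rewrite -real_normK ?num_real // -normq expr2 [`|r1| * _]mulrC.
  by apply: ler_wpM2r => //; apply: ler_wpM2l => //; apply: ltW.
Qed.

Lemma quadratic_lb_lead_ge0 (a b c L : R) :
  (forall t, L <= a * t ^+ 2 + b * t + c) -> 0 <= a.
Proof.
move=> lb; rewrite leNgt; apply/negP => a_lt0.
pose K := `|b| + `|c - L|; pose t := 1 + K / - a.
have K_ge0 : 0 <= K by rewrite addr_ge0.
have t_ge1 : 1 <= t by rewrite lerDl divr_ge0 // oppr_ge0 ltW.
have at_eq : a * t ^+ 2 = t * (a - K) by rewrite /t; field; rewrite lt_eqF.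
have bt : b * t <= `|b| * t by rewrite ler_wpM2r ?ler_norm //; lra.
have cL : c - L <= `|c - L| * t.
  by rewrite (le_trans (ler_norm _)) // ler_peMr //; lra.
have := lb t; rewrite /K in at_eq; nra.
Qed.

Lemma quartic_eventually_lt (L e0 e1 e2 e3 e4 k c : R) : k < 0 -> 0 <= c ->
  exists T, forall s r, `|s| = T ^+ 2 -> r ^+ 2 <= c * T ^+ 2 ->
    e0 + s * e1 + r * e2 + s * r * e3 + r ^+ 2 * e4 + s ^+ 2 * k < L.
Proof.
move=> k_lt0 c_ge0.
pose K := `|e0| + `|e1| + (1 + c) * `|e2| + (1 + c) * `|e3| + c * `|e4|.
have K_ge0 : 0 <= K by rewrite /K !addr_ge0 ?mulr_ge0 //; lra.
(* The terms other than s^2 k are O(T^3), and T makes K T^3 + k T^4 < L. *)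
exists (1 + (K + `|L|) / - k) => s r; set T := 1 + _ => sT rT.
have KL_ge0 : 0 <= K + `|L| by rewrite addr_ge0.
have T_ge1 : 1 <= T by rewrite lerDl divr_ge0 //; lra.
have kT : k * T = k - (K + `|L|) by rewrite /T; field; rewrite lt_eqF.
have T2 : T <= T ^+ 2 by rewrite expr2 ler_peMl //; lra.
have T3 : T ^+ 2 <= T ^+ 3 by rewrite exprS ler_peMl //; lra.
have r_le : `|r| <= (1 + c) * T.
  rewrite -(ler_pXn2r (n := 2)) ?nnegrE ?mulr_ge0 //; try lra.
  by rewrite real_normK ?num_real // (le_trans rT) // exprMn ler_wpM2r //; nra.
have e0_le : e0 <= `|e0| * T ^+ 3 by rewrite (le_trans (ler_norm _)) // ler_peMr //; nra.
have e1_le : s * e1 <= `|e1| * T ^+ 3.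
  by rewrite (le_trans (ler_mul_norm _ _)) // sT mulrC ler_wpM2l.
have r_le3 : `|r| <= (1 + c) * T ^+ 3 by rewrite (le_trans r_le) // ler_wpM2l; lra.
have e2_le : r * e2 <= (1 + c) * `|e2| * T ^+ 3.
  by have := ler_mul_norm r e2; have := normr_ge0 e2; nra.
have e3_le : s * r * e3 <= (1 + c) * `|e3| * T ^+ 3.
  have := ler_mul_norm (s * r) e3; rewrite normrM sT.
  have : T ^+ 2 * `|r| <= (1 + c) * T ^+ 3 by rewrite exprS; nra.
  by have := normr_ge0 e3; have := normr_ge0 r; nra.
have e4_le : r ^+ 2 * e4 <= c * `|e4| * T ^+ 3.
  have := ler_mul_norm (r ^+ 2) e4; rewrite ger0_norm ?sqr_ge0 //.
  have := le_trans rT (ler_wpM2l c_ge0 T3).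
  by have := normr_ge0 e4; nra.
have s2 : s ^+ 2 = T ^+ 4 by rewrite -real_normK ?num_real // sT -exprM.
have : K * T ^+ 3 + k * T ^+ 4 = T ^+ 3 * (k * T + K) by ring.
rewrite kT /K => e; have := normr_ge0 L; have := ler_norm (- L); rewrite normrN.
nra.
Qed.

End RealPolynomials.

Section Finsler.
Variables (R : realType) (n : nat) (P Q : 'M[R]_n).
Hypotheses (sP : P^T = P) (sQ : Q^T = Q).
Hypothesis P_ge0_on_null : forall z, bform Q z z = 0 -> 0 <= bform P z z.

Lemma finsler_ratio_le u w : 0 < bform Q u u -> bform Q w w < 0 ->
  - bform P u u / bform Q u u <= - bform P w w / bform Q w w.
Proof.
set a0 := bform Q u u; set a2 := bform Q w w => a0_gt0 a2_lt0.
have a2_neq0 : a2 != 0 by rewrite lt_eqF.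
have [r1 [r2 [e1 e2 prod]]] :
    exists r1 r2, [/\ a2 * r1 ^+ 2 + 2 * bform Q u w * r1 + a0 = 0,
                      a2 * r2 ^+ 2 + 2 * bform Q u w * r2 + a0 = 0 & a2 * (r1 * r2) = a0].
  by apply: quadratic_real_roots => //; nra.
have P_root r : a2 * r ^+ 2 + 2 * bform Q u w * r + a0 = 0 ->
    0 <= bform P u u + 2 * r * bform P u w + r ^+ 2 * bform P w w.
  move=> er; rewrite -bform_line //; apply: P_ge0_on_null.
  by rewrite bform_line // -/a0 -/a2 -er; ring.
(* The line u + r w meets the null cone of Q on both sides of u. *)
have r12_lt0 : r1 * r2 < 0 by nra.
have key : 0 <= bform P u u - r1 * r2 * bform P w w.
  wlog r1_lt0 : r1 r2 e1 e2 prod r12_lt0 / r1 < 0.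
    move=> hwlog; have [r1_lt0|r1_ge0] := ltP r1 0; first exact: hwlog.
    by have := hwlog r2 r1 e2 e1; rewrite [r2 * r1]mulrC; apply => //; nra.
  have r2_gt0 : 0 < r2 by nra.
  have := P_root _ e1; have := P_root _ e2 => I2 I1.
  have : 0 <= (r2 - r1) * (bform P u u - r1 * r2 * bform P w w) by nra.
  by rewrite pmulr_rge0 // subr_gt0 (lt_trans r1_lt0).
have eu : - bform P u u / a0 * a0 = - bform P u u by rewrite divfK // gt_eqF.
have ew : - bform P w w / a2 * a2 = - bform P w w by rewrite divfK.
nra.
Qed.

Lemma finsler :
  (exists u, 0 < bform Q u u) -> (exists w, bform Q w w < 0) ->
  exists mu, psd (P + mu *: Q).
Proof.
move=> [u0 Qu0] [w0 Qw0].
pose S : set R := fun y => exists2 u, 0 < bform Q u u & - bform P u u / bform Q u u = y.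
have ubS w : bform Q w w < 0 -> ubound S (- bform P w w / bform Q w w).
  by move=> Qw _ [u Qu <-]; apply: finsler_ratio_le.
exists (sup S); split; first by rewrite linearD linearZ /= sP sQ.
move=> z; rewrite -/(bform _ z z) bform_mxD bform_mxZ.
have [Qz|Qz|Qz] := ltgtP (bform Q z z) 0; last first.
- by rewrite Qz mulr0 addr0; apply: P_ge0_on_null.
- have : - bform P z z / bform Q z z <= sup S.
    apply: ub_le_sup; last by exists z.
    by exists (- bform P w0 w0 / bform Q w0 w0); exact: ubS Qw0.
  have : - bform P z z / bform Q z z * bform Q z z = - bform P z z by rewrite divfK ?gt_eqF.
  nra.
- have : sup S <= - bform P z z / bform Q z z.
    by apply: (ge_sup _ (ubS _ Qz)); exists (- bform P u0 u0 / bform Q u0 u0), u0.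
  have : - bform P z z / bform Q z z * bform Q z z = - bform P z z by rewrite divfK ?lt_eqF.
  nra.
Qed.

End Finsler.

Section PositiveDefinite.
Variable R : realType.

Lemma bform_block m1 m2 (M11 : 'M[R]_m1) (M12 : 'M[R]_(m1, m2)) (M21 : 'M[R]_(m2, m1))
    (M22 : 'M[R]_m2) x y :
  bform (block_mx M11 M12 M21 M22) (col_mx x y) (col_mx x y) =
  bform M11 x x + sc (x^T *m M12 *m y) + sc (y^T *m M21 *m x) + bform M22 y y.
Proof.
by rewrite /bform tr_col_mx mul_row_block mul_row_col !mulmxDl !scD; ring.
Qed.

Lemma bform_block_scalar n (p : 'M[R]_1) (r : 'cV[R]_n) (M : 'M[R]_n) t v :
  bform (block_mx p r^T r M) (col_mx t%:M v) (col_mx t%:M v) =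
  sc p * t ^+ 2 + 2 * t * vdot r v + bform M v v.
Proof.
rewrite bform_block /bform !tr_scalar_mx !mul_scalar_mx -!scalemxAl !mul_mx_scalar.
by rewrite !scZ -/(vdot r v) vdotC; ring.
Qed.

Lemma pd_factor_step n (M : 'M[R]_(1 + n)) :
    (forall M' : 'M[R]_n, pd M' -> exists V : 'M[R]_n, M' = V *m V^T) ->
  pd M -> exists V : 'M[R]_(1 + n), M = V *m V^T.
Proof.
move=> IH; rewrite -[M]submxK; set p := ulsubmx M; set r := dlsubmx M; set M' := drsubmx M.
case=> /[dup] sM; rewrite tr_block_mx => /eq_block_mx[_ rc _ sM'].
rewrite -rc => pdM.
have p_gt0 : 0 < sc p.
  have := pdM (col_mx 1%:M 0); rewrite -/(bform _ _ _) bform_block_scalar.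
  rewrite /vdot /bform !mulmx0 sc0.
  by rewrite expr1n !mulr1 mulr0 !addr0; apply; rewrite col_mx_eq0 negb_and oner_neq0.
pose S := M' - (sc p)^-1 *: (r *m r^T).
have pdS : pd S.
  split; first by rewrite /S linearB /= linearZ /= trmx_mul trmxK sM'.
  move=> v v_neq0; rewrite -/(bform S v v).
  have -> : bform S v v = bform M' v v - (sc p)^-1 * vdot r v ^+ 2.
    rewrite /S /bform mulmxDr mulmxDl scD mulmxN mulNmx -scalemxAr -scalemxAl.
    by rewrite scN scZ mulmxA -[v^T *m r *m r^T *m v]mulmxA sc_mul vdotC expr2.
  have := pdM (col_mx (- vdot r v / sc p)%:M v); rewrite -/(bform _ _ _) bform_block_scalar.
  rewrite col_mx_eq0 negb_and v_neq0 orbT => /(_ isT).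
  have -> : sc p * (- vdot r v / sc p) ^+ 2 + 2 * (- vdot r v / sc p) * vdot r v =
            - ((sc p)^-1 * vdot r v ^+ 2) by field; rewrite gt_eqF.
  lra.
have [W eW] := IH S pdS.
(* M = v0 v0^T + [0 0; 0 S] with v0 = (sqrt p, r / sqrt p). *)
pose q := Num.sqrt (sc p).
have q_gt0 : 0 < q by rewrite sqrtr_gt0.
have qq : q * q = sc p by rewrite -expr2 sqr_sqrtr // ltW.
exists (row_mx (col_mx q%:M (q^-1 *: r)) (col_mx 0 W)).
rewrite tr_row_mx mul_row_col !tr_col_mx !mul_col_row !trmx0 !mulmx0 !mul0mx -eW.
rewrite add_block_mx !addr0 tr_scalar_mx linearZ /=.
congr block_mx.
- by rewrite -scalar_mxM qq /sc -mx11_scalar.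
- by rewrite mul_scalar_mx scalerA mulfV ?gt_eqF // scale1r.
- by rewrite mul_mx_scalar scalerA mulfV ?gt_eqF // scale1r.
- by rewrite /S -scalemxAl -scalemxAr scalerA -invfM qq addrC subrK.
Qed.

Lemma pd_factor n (M : 'M[R]_n) : pd M -> exists V : 'M[R]_n, M = V *m V^T.
Proof.
elim: n M => [|n IH] M pdM; first by exists 0; apply/matrixP => [[]].
exact: pd_factor_step.
Qed.

Lemma frob_mul_tr n (B V : 'M[R]_n) :
  frob B (V *m V^T) = \sum_k bform B (col k V) (col k V).
Proof.
rewrite /frob /bform /sc.
under eq_bigr => i _ do under eq_bigr => j _ do rewrite !mxE big_distrr /=.
under [RHS]eq_bigr => k _ do rewrite !mxE.
under [RHS]eq_bigr => k _ do under eq_bigr => j _ do rewrite !mxE big_distrl /=.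
rewrite exchange_big /=; under eq_bigr => j _ do rewrite exchange_big /=.
rewrite exchange_big /=; apply: eq_bigr => k _; apply: eq_bigr => j _.
by apply: eq_bigr => i _; rewrite !mxE; ring.
Qed.

Lemma frob_outer n (B : 'M[R]_n) u : frob B (u *m u^T) = bform B u u.
Proof.
rewrite /frob /bform /sc !mxE.
under eq_bigr => i _ do under eq_bigr => j _ do rewrite !mxE big_ord1 !mxE.
under [RHS]eq_bigr => j _ do rewrite !mxE big_distrl /=.
rewrite exchange_big /=; apply: eq_bigr => j _; apply: eq_bigr => i _.
by rewrite !mxE; ring.
Qed.

Lemma frobBr n (B X Y : 'M[R]_n) : frob B (X - Y) = frob B X - frob B Y.
Proof.
rewrite /frob -sumrB; apply: eq_bigr => i _; rewrite -sumrB; apply: eq_bigr => j _.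
by rewrite !mxE mulrBr.
Qed.

Lemma frobNl n (B X : 'M[R]_n) : frob (- B) X = - frob B X.
Proof.
rewrite /frob -sumrN; apply: eq_bigr => i _; rewrite -sumrN; apply: eq_bigr => j _.
by rewrite !mxE mulNr.
Qed.

Lemma frob_ge0 n (B P : 'M[R]_n) :
  (forall v, 0 <= bform B v v) -> pd P -> 0 <= frob B P.
Proof.
by move=> psdB /pd_factor[V ->]; rewrite frob_mul_tr; apply: sumr_ge0.
Qed.

Lemma quadf_lb_psd n (M : 'M[R]_n) m k L : M^T = M ->
  (forall y, L <= quadf M m k y) -> forall v, 0 <= bform M v v.
Proof.
move=> sM lb v; apply: (@quadratic_lb_lead_ge0 _ _ (2 * (bform M 0 v + vdot m v))
  (quadf M m k 0) L) => t.
by have := lb (0 + t *: v); rewrite quadf_line //; lra.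
Qed.

Lemma quadf_relax_lb n (B : 'M[R]_n) b d L x (P : 'M[R]_n) : B^T = B -> pd P ->
  (forall y, L <= quadf B b d y) -> L <= quadf B b d x + frob B P.
Proof.
move=> sB pdP lb; have := frob_ge0 (quadf_lb_psd sB lb) pdP; have := lb x; lra.
Qed.

Lemma quadf_relax_ub n (B : 'M[R]_n) b d U x (P : 'M[R]_n) : B^T = B -> pd P ->
  (forall y, quadf B b d y <= U) -> quadf B b d x + frob B P <= U.
Proof.
move=> sB pdP ub.
have sNB : (- B)^T = - B by rewrite linearN /= sB.
have lbN y : - U <= quadf (- B) (- b) (- d) y by rewrite quadfN lerN2.
by have := quadf_relax_lb x sNB pdP lbN; rewrite quadfN frobNl; lra.
Qed.

End PositiveDefinite.

Section LevelSets.
Variables (R : realType) (n : nat) (B : 'M[R]_n) (b : 'cV[R]_n) (d : R).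
Hypothesis sB : B^T = B.
Local Notation h := (quadf B b d).

Lemma quadf_ivt y1 y2 v : h y1 <= v <= h y2 -> exists y, h y = v.
Proof.
move=> /andP[le1 le2]; set x := y2 - y1.
pose p : {poly R} := bform B x x *: 'X^2 + (2 * (bform B y1 x + vdot b x)) *: 'X +
  (h y1 - v)%:P.
have pE t : p.[t] = h (y1 + t *: x) - v.
  by rewrite quadf_line // !(hornerD, hornerZ, hornerXn, hornerX, hornerC); ring.
have y2E : y1 + 1 *: x = y2 by rewrite scale1r /x addrC subrK.
have [t _ /rootP pt0] : exists2 t, t \in `[0, 1] & root p t.
  by apply: poly_ivt ler01 _; rewrite !pE scale0r addr0 y2E; lra.
by exists (y1 + t *: x); apply/eqP; rewrite -subr_eq0 -pE pt0.
Qed.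

Lemma quadf_meets_interval alpha beta : alpha < beta ->
  (exists y1, h y1 < beta) -> (exists y2, alpha < h y2) ->
  exists y, alpha < h y < beta.
Proof.
move=> ab [y1 y1b] [y2 ay2].
have [ay1|y1a] := ltP alpha (h y1); first by exists y1; rewrite ay1.
have [y2b|by2] := ltP (h y2) beta; first by exists y2; rewrite ay2.
have [|y hy] := @quadf_ivt y1 y2 ((alpha + beta) / 2); first by apply/andP; split; lra.
by exists y; rewrite hy; apply/andP; split; lra.
Qed.

Lemma quadf_nonconst w y : bform B w w != 0 -> exists x, h x != h y.
Proof.
move=> w_neq0; have [ep|ne] := eqVneq (h (y + 1 *: w)) (h y); last by exists (y + 1 *: w).
exists (y + (-1) *: w); apply: contra w_neq0 => /eqP em.
by move: ep em; rewrite !quadf_line //; set k := bform B w w => ep em; apply/eqP; lra.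
Qed.

Lemma level_between alpha beta w y : bform B w w != 0 -> alpha < h y < beta ->
  exists m x1 x2, [/\ alpha <= m <= beta, h x2 < m & m < h x1].
Proof.
move=> w_neq0 /andP[ay yb]; have [x] := quadf_nonconst y w_neq0.
rewrite neq_lt => /orP[xy|yx].
- exists ((h y + Num.max (h x) alpha) / 2), y, x.
  have : h x <= Num.max (h x) alpha by rewrite le_max lexx.
  have : alpha <= Num.max (h x) alpha by rewrite le_max lexx orbT.
  have : Num.max (h x) alpha < h y by rewrite gt_max xy ay.
  by split; [apply/andP; split|..]; lra.
- exists ((h y + Num.min (h x) beta) / 2), x, y.
  have : Num.min (h x) beta <= h x by rewrite ge_min lexx.
  have : Num.min (h x) beta <= beta by rewrite ge_min lexx orbT.
  have : h y < Num.min (h x) beta by rewrite lt_min yx yb.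
  by split; [apply/andP; split|..]; lra.
Qed.

End LevelSets.

Section Feasibility.
Variable R : realType.

Lemma relaxation_strictly_feasible n (B : 'M[R]_n) b d alpha beta : B^T = B ->
  (exists (xh : 'cV[R]_n) (Xh : 'M[R]_n),
      Xh^T = Xh /\ pd (Xh - xh *m xh^T) /\
      alpha < frob B Xh + 2 * sc (b^T *m xh) + d < beta) ->
  exists y, alpha < quadf B b d y < beta.
Proof.
move=> sB [xh [Xh [_ [pdP /andP[lo hi]]]]].
have val : frob B Xh + 2 * sc (b^T *m xh) + d =
    quadf B b d xh + frob B (Xh - xh *m xh^T).
  by rewrite frobBr frob_outer quadfE /vdot; ring.
rewrite val in lo hi.
apply: quadf_meets_interval => //; first lra.
- apply: NNPP => no; have lb y : beta <= quadf B b d y.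
    by rewrite leNgt; apply/negP => yb; apply: no; exists y.
  by have := quadf_relax_lb xh sB pdP lb; lra.
- apply: NNPP => no; have ub y : quadf B b d y <= alpha.
    by rewrite leNgt; apply/negP => ay; apply: no; exists y.
  by have := quadf_relax_ub xh sB pdP ub; lra.
Qed.

Lemma sym_neq0_form n (B : 'M[R]_n) : B^T = B -> B != 0 -> exists w, bform B w w != 0.
Proof.
move=> sB /eqP B_neq0; apply: NNPP => no; apply: B_neq0; apply/matrixP => i j.
have zero w : bform B w w = 0 by apply/eqP/negPn/negP => nz; apply: no; exists w.
have := zero (delta_mx i 0 + delta_mx j 0).
rewrite !(bformDl, bformDr) !zero (bformC (delta_mx j 0) _ sB) bform_delta mxE; lra.
Qed.

Lemma recession_nonneg n (A B : 'M[R]_n) a b c d L (x0 w x : 'cV[R]_n) :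
  A^T = A -> B^T = B ->
  (forall y, quadf B b d y = quadf B b d x0 -> L <= quadf A a c y) ->
  bform B w w != 0 -> bform B x x = 0 -> 0 <= bform A x x.
Proof.
move=> sA sB lb w_neq0 x_null; rewrite leNgt; apply/negP => k_lt0.
set l := bform B x0 x + vdot b x; set bw := bform B w w.
have bw_gt0 : 0 < `|bw| by rewrite normr_gt0.
(* Move by s along x and stay in the level set of x0 by a correction r along w;
   the sign of s makes the equation for r solvable with r = O(sqrt |s|). *)
pose eps : R := if 0 <= l * bw then -1 else 1.
have eps_sign : eps * l * bw <= 0.
  by rewrite /eps; case: (lerP 0 (l * bw)) => /= h; nra.
have [T hT] := quartic_eventually_lt L (quadf A a c x0) (2 * (bform A x0 x + vdot a x))
  (2 * (bform A x0 w + vdot a w)) (2 * bform A x w) (bform A w w) k_lt0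
  (divr_ge0 (mulr_ge0 (ler0n _ 2) (normr_ge0 l)) (normr_ge0 bw)).
pose s := eps * T ^+ 2.
have s_norm : `|s| = T ^+ 2.
  rewrite normrM (ger0_norm (sqr_ge0 T)) /eps.
  by case: (lerP 0 (l * bw)) => _ /=; rewrite ?normrN normr1 mul1r.
have [r [r_root r_small]] :
    exists r, bw * r ^+ 2 + 2 * (bform B x0 w + vdot b w + s * bform B x w) * r
              + 2 * s * l = 0 /\ r ^+ 2 * `|bw| <= `|2 * s * l|.
  apply: (@small_real_root R bw _ (2 * s * l) w_neq0).
  have -> : bw * (2 * s * l) = 2 * T ^+ 2 * (eps * l * bw) by rewrite /s; ring.
  by rewrite mulr_ge0_le0 // mulr_ge0 ?sqr_ge0.
have on_level : quadf B b d (x0 + s *: x + r *: w) = quadf B b d x0.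
  by rewrite quadf_plane // x_null -/l -/bw; nra.
have r_le : r ^+ 2 <= 2 * `|l| / `|bw| * T ^+ 2.
  rewrite mulrAC ler_pdivlMr //; apply: (le_trans r_small).
  by rewrite normrM (normrM 2) s_norm normr_nat mulrAC.
have := hT s r s_norm r_le; have := lb _ on_level; rewrite quadf_plane //; nra.
Qed.

End Feasibility.

Section Homogenization.
Variable R : realType.

Definition homog n (M : 'M[R]_n) (m : 'cV[R]_n) (k : R) : 'M[R]_(n + 1) :=
  block_mx M m m^T k%:M.

Lemma homog_tr n (M : 'M[R]_n) m k : M^T = M -> (homog M m k)^T = homog M m k.
Proof. by move=> sM; rewrite /homog tr_block_mx trmxK tr_scalar_mx sM. Qed.

Lemma bform_homog n (M : 'M[R]_n) m k x t :
  bform (homog M m k) (col_mx x t%:M) (col_mx x t%:M) =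
  bform M x x + 2 * t * vdot m x + k * t ^+ 2.
Proof.
rewrite bform_block /bform !tr_scalar_mx !mul_scalar_mx -!scalemxAl !mul_mx_scalar.
by rewrite -/(bform M x x) !scZ sc_scalar -/(vdot m x) vdotC; ring.
Qed.

Lemma bform_homog1 n (M : 'M[R]_n) m k x :
  bform (homog M m k) (col_mx x 1%:M) (col_mx x 1%:M) = quadf M m k x.
Proof. by rewrite bform_homog quadfE; ring. Qed.

Lemma bform_homog_scale n (M : 'M[R]_n) m k x t : t != 0 ->
  bform (homog M m k) (col_mx x t%:M) (col_mx x t%:M) = t ^+ 2 * quadf M m k (t^-1 *: x).
Proof. by move=> t_neq0; rewrite bform_homog quadfE bformZl bformZr vdotZr; field. Qed.

Lemma homog_nonneg_on_null n (A B : 'M[R]_n) a b c d L lvl (x0 w : 'cV[R]_n) :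
  A^T = A -> B^T = B ->
  (forall y, quadf B b d y = lvl -> L <= quadf A a c y) ->
  quadf B b d x0 = lvl -> bform B w w != 0 ->
  forall z, bform (homog B b (d - lvl)) z z = 0 -> 0 <= bform (homog A a (c - L)) z z.
Proof.
move=> sA sB lb x0_lvl w_neq0 z.
have -> : z = col_mx (usubmx z) (dsubmx z 0 0)%:M by rewrite -mx11_scalar vsubmxK.
set x := usubmx z; set t := dsubmx z 0 0.
have [->|t_neq0] := eqVneq t 0.
  rewrite !bform_homog expr0n /= !(mulr0, mul0r, addr0).
  have lb0 y : quadf B b d y = quadf B b d x0 -> L <= quadf A a c y.
    by rewrite x0_lvl; apply: lb.
  exact: recession_nonneg sA sB lb0 w_neq0.
rewrite !bform_homog_scale // => /eqP; rewrite mulf_eq0 sqrf_eq0 (negbTE t_neq0) /=.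
rewrite !quadf_shift subr_eq0 => /eqP /lb L_le.
by rewrite mulr_ge0 ?sqr_ge0 ?subr_ge0.
Qed.

Lemma dualmx_homog n (A B : 'M[R]_n) a b k1 k2 mu :
  dualmx A B a b mu (k1 + mu * k2) = homog A a k1 + mu *: homog B b k2.
Proof.
by rewrite /dualmx /homog scale_block_mx add_block_mx scale_scalar_mx raddfD.
Qed.

Lemma dual_feasible_bounded n (A B : 'M[R]_n) a b c d alpha beta mu s :
  psd (dualmx A B a b mu s) ->
  exists L, forall x, alpha <= quadf B b d x <= beta -> L <= quadf A a c x.
Proof.
case=> _ psdD; exists (c + mu * d - s - `|mu| * (`|alpha| + `|beta|)) => x /andP[ax xb].
have := psdD (col_mx x 1%:M).
rewrite -/(bform _ _ _) /dualmx -linearZ -linearD -/(homog _ _ s) bform_homog1.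
rewrite (quadf_comb _ _ _ _ c d).
have h_bound : `|quadf B b d x| <= `|alpha| + `|beta|.
  have := ler_norm (- alpha); have := ler_norm beta; rewrite normrN ler_norml.
  by have := normr_ge0 alpha; have := normr_ge0 beta => *; apply/andP; split; lra.
by have := ler_mul_norm mu (quadf B b d x); have := normr_ge0 mu; nra.
Qed.

End Homogenization.

Theorem corollary1 (R : realType) (n : nat) (A B : 'M[R]_n) (a b : 'cV[R]_n)
  (c d alpha beta : R) :
  A^T = A -> B^T = B -> alpha <= beta -> B != 0 ->
  (exists (xh : 'cV[R]_n) (Xh : 'M[R]_n),
      Xh^T = Xh /\ pd (Xh - xh *m xh^T) /\
      alpha < frob B Xh + 2 * sc (b^T *m xh) + d < beta) ->
  ((exists L : R, forall x : 'cV[R]_n,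
       alpha <= quadf B b d x <= beta -> L <= quadf A a c x)
   <->
   (exists mu s : R, psd (dualmx A B a b mu s))).
Proof.
(* alpha <= beta is implied by the Slater condition. *)
move=> sA sB _ B_neq0 slater; split; last by case=> mu [s]; apply: dual_feasible_bounded.
case=> L lb.
have [y y_in] := relaxation_strictly_feasible sB slater.
have [w w_neq0] := sym_neq0_form sB B_neq0.
have [lvl [x1 [x2 [/andP[lo hi] x2_lt x1_gt]]]] := level_between sB w_neq0 y_in.
have [x0 x0_lvl] : exists x0, quadf B b d x0 = lvl.
  by apply: (quadf_ivt sB (y1 := x2) (y2 := x1)); rewrite !ltW.
have lb_lvl y' : quadf B b d y' = lvl -> L <= quadf A a c y'.
  by move=> y'_lvl; apply: lb; rewrite y'_lvl lo hi.
have [||mu psd_mu] := finsler (homog_tr _ (c - L) sA) (homog_tr _ (d - lvl) sB)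
  (homog_nonneg_on_null sA sB lb_lvl x0_lvl w_neq0).
- by exists (col_mx x1 1%:M); rewrite bform_homog1 quadf_shift subr_gt0.
- by exists (col_mx x2 1%:M); rewrite bform_homog1 quadf_shift subr_lt0.
by exists mu, (c - L + mu * (d - lvl)); rewrite dualmx_homog.
Qed.
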